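(* Let $p\in\mathbb{R}$. Assume $z=(v,m,\sigma,e)\in Z$ satisfies \[\lambda_{\max}(v\otimes v-\sigma)+\varepsilon|m-(e+p)v|<e\] for some $\varepsilon>0$. Then there exists $\gamma=\gamma_\varepsilon(e)>0$ depending only on $\varepsilon$ and $e$ such that $z\in\operatorname{int}(K_\gamma^\Lambda)$. Moreover, the map $\mathbb{R}_+\ni e\mapsto\gamma_\varepsilon(e)\in\mathbb{R}_+$ is continuous.
   Context: $\mathcal S_0^{2\times2}$ is the space of traceless symmetric $2\times2$ matrices, $Z:=\mathbb{R}^2\times\mathbb{R}^2\times\mathcal S_0^{2\times2}\times\mathbb{R}$, $\lambda_{\max}$ the largest eigenvalue, $K_\gamma:=\{z\in Z: v\otimes v-\sigma=e\,\mathrm{Id},\ m=(e+p)v,\ e\le\gamma\}$. The wave cone is $\Lambda=\{\bar z=(\bar v,\bar m,\bar\sigma,\bar e)\in Z:\ (\bar v,\bar e)\neq0\text{ and there is }0\ne(\xi,c)\in\mathbb{R}^2\times\mathbb{R}\text{ with }(\bar\sigma+\bar e\,\mathrm{Id})\xi+c\bar v=0,\ \bar v\cdot\xi=0,\ \bar m\cdot\xi+c\bar e=0\}$. A function $f:Z\to\mathbb{R}$ is $\Lambda$-convex if $s\mapsto f(z+s\bar z)$ is convex for all $z\in Z$, $\bar z\in\Lambda$; $K_\gamma^\Lambda$ is the set of $z\in Z$ with $f(z)\le\sup_{K_\gamma}f$ for all $\Lambda$-convex $f$. *)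

From HB Require Import structures.
From mathcomp Require Import all_boot all_order all_algebra.
From mathcomp Require Import all_classical all_reals all_analysis.
Set Implicit Arguments.
Unset Strict Implicit.
Unset Printing Implicit Defensive.
Import Order.TTheory GRing.Theory Num.Theory.
Import numFieldNormedType.Exports.
Local Open Scope ring_scope.
Local Open Scope classical_set_scope.

(* Points of R^2 x R^2 x M_2(R) x R ; the space Z is the subset where
   sigma is symmetric and traceless (predicate inZ). Vectors are columns. *)
Record Zpt (R : realType) := MkZ {
  zv : 'cV[R]_2 ; zm : 'cV[R]_2 ; zs : 'M[R]_2 ; ze : R }.

Definition inZ (R : realType) (z : Zpt R) : Prop :=
  (zs z)^T = zs z /\ \tr (zs z) = 0.

Definition zadd (R : realType) (z w : Zpt R) : Zpt R :=
  MkZ (zv z + zv w) (zm z + zm w) (zs z + zs w) (ze z + ze w).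

Definition zscale (R : realType) (s : R) (z : Zpt R) : Zpt R :=
  MkZ (s *: zv z) (s *: zm z) (s *: zs z) (s * ze z).

Definition dot (R : realType) (x y : 'cV[R]_2) : R := \sum_i x i 0 * y i 0.
Definition enorm (R : realType) (x : 'cV[R]_2) : R := Num.sqrt (dot x x).

Definition lambda_max (R : realType) (A : 'M[R]_2) : R :=
  sup [set a : R | eigenvalue A a].

Definition Kset (R : realType) (p gamma : R) : set (Zpt R) :=
  [set z | inZ z /\ zv z *m (zv z)^T - zs z = (ze z)%:M
          /\ zm z = (ze z + p) *: zv z /\ ze z <= gamma].

Definition Lambda (R : realType) : set (Zpt R) :=
  [set zb | inZ zb /\ (zv zb <> 0 \/ ze zb <> 0) /\
     exists (xi : 'cV[R]_2) (c : R), (xi <> 0 \/ c <> 0) /\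
       (zs zb + (ze zb)%:M) *m xi + c *: zv zb = 0 /\
       dot (zv zb) xi = 0 /\
       dot (zm zb) xi + c * ze zb = 0].

Definition convex_fun1 (R : realType) (g : R -> R) : Prop :=
  forall s t l : R, 0 <= l -> l <= 1 ->
    g (l * s + (1 - l) * t) <= l * g s + (1 - l) * g t.

Definition Lambda_convex (R : realType) (f : Zpt R -> R) : Prop :=
  forall z zb, inZ z -> Lambda zb -> convex_fun1 (fun s => f (zadd z (zscale s zb))).

Definition Lambda_hull (R : realType) (S : set (Zpt R)) : set (Zpt R) :=
  [set z | inZ z /\ forall f : Zpt R -> R, Lambda_convex f ->
      ((f z)%:E <= ereal_sup [set (f y)%:E | y in S])%E].

Definition zdist (R : realType) (z w : Zpt R) : R :=
  Num.sqrt (dot (zv z - zv w) (zv z - zv w) + dot (zm z - zm w) (zm z - zm w)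
    + \sum_i \sum_j (zs z i j - zs w i j) ^+ 2 + (ze z - ze w) ^+ 2).

Definition interiorZ (R : realType) (S : set (Zpt R)) : set (Zpt R) :=
  [set z | inZ z /\ exists r : R, 0 < r /\
      forall w, inZ w -> zdist z w < r -> S w].

From HB Require Import structures.
From mathcomp Require Import all_boot all_order all_algebra.
From mathcomp Require Import all_classical all_reals all_analysis.
From mathcomp Require Import ring lra.

(* Write C = e Id - (v v^T - sigma) and n = m - (e + p) v.  The hypothesis says that
   C - eps |n| Id is positive definite; in the decomposition C = c e1 e1^T + C22 u u^T
   with u = (C12 / C22, 1), the coordinates of n are then below 1/eps, and this condition
   is open.  Splitting v along e1 into v + s e1, v - t e1 with s t = 2 c, and along u
   likewise, gives two segments with endpoints on K whose barycenters realise the two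
   rank-one parts of C, and z is the midpoint of these barycenters.  Differences of points
   of K lie in the wave cone, so z is a second-order laminate of four points of K and a
   Lambda-convex function is at most its maximum on them.  Their energies |x|^2/2 are at
   most 18 e + 8/eps^2; the extra 18 in gamma(e) = 18 e + 18 + 8/eps^2 covers a
   neighbourhood of z, on which e grows by less than 1. *)

Set Implicit Arguments.
Unset Strict Implicit.
Unset Printing Implicit Defensive.
Import Order.TTheory GRing.Theory Num.Theory.
Import numFieldNormedType.Exports.
Local Open Scope ring_scope.
Local Open Scope classical_set_scope.

Lemma ord2P (P : 'I_2 -> Prop) : P 0 -> P 1 -> forall i, P i.
Proof.
move=> P0 P1 [[|[|//]] lt_i2].
- by rewrite (_ : Ordinal lt_i2 = 0) //; apply/val_inj.
- by rewrite (_ : Ordinal lt_i2 = 1) //; apply/val_inj.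
Qed.

Section Coordinates.
Variable R : realType.

Lemma sum2E (F : 'I_2 -> R) : \sum_i F i = F 0 + F 1.
Proof. by rewrite big_ord_recl big_ord1; congr (_ + F _); apply/val_inj. Qed.

Lemma det_mx22 (A : 'M[R]_2) : \det A = A 0 0 * A 1 1 - A 0 1 * A 1 0.
Proof.
rewrite (expand_det_row _ 0) sum2E /cofactor !det_mx11 !mxE /=.
have -> : lift 0 (0 : 'I_1) = 1 :> 'I_2 by apply/val_inj.
have -> : lift 1 (0 : 'I_1) = 0 :> 'I_2 by apply/val_inj.
by rewrite expr0 expr1 !mul1r mulN1r mulrN.
Qed.

Lemma cV2P (x y : 'cV[R]_2) : x 0 0 = y 0 0 -> x 1 0 = y 1 0 -> x = y.
Proof. by move=> h0 h1; apply/matrixP => i j; rewrite (ord1 j); elim/ord2P: i. Qed.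

Lemma M2P (A B : 'M[R]_2) :
  A 0 0 = B 0 0 -> A 0 1 = B 0 1 -> A 1 0 = B 1 0 -> A 1 1 = B 1 1 -> A = B.
Proof. by move=> *; apply/matrixP => i j; elim/ord2P: i; elim/ord2P: j. Qed.

Lemma zP (a b : Zpt R) :
  zv a = zv b -> zm a = zm b -> zs a = zs b -> ze a = ze b -> a = b.
Proof. by case: a; case: b => /= ? ? ? ? ? ? ? ? -> -> -> ->. Qed.

Lemma dotE (x y : 'cV[R]_2) : dot x y = x 0 0 * y 0 0 + x 1 0 * y 1 0.
Proof. exact: sum2E. Qed.

Lemma mxtrace2 (A : 'M[R]_2) : \tr A = A 0 0 + A 1 1.
Proof. exact: sum2E. Qed.

Definition cV2 (a b : R) : 'cV[R]_2 := \col_i (if i == 0 then a else b).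

Lemma cV2E0 a b : cV2 a b 0 0 = a. Proof. by rewrite mxE. Qed.
Lemma cV2E1 a b : cV2 a b 1 0 = b. Proof. by rewrite mxE. Qed.

End Coordinates.

Ltac zpt_field := apply: zP => /=; try (apply/matrixP => ? ?; rewrite !mxE); by field.

Section WaveCone.
Variable R : realType.
Implicit Types (a b w : Zpt R) (x y : 'cV[R]_2) (f : Zpt R -> R) (l al be : R).

Definition zsub a b := zadd a (zscale (-1) b).
Definition zcomb (l : R) a b := zadd (zscale l a) (zscale (1 - l) b).

Lemma inZ_zadd a b : inZ a -> inZ b -> inZ (zadd a b).
Proof.
by move=> [aT atr] [bT btr]; split; rewrite /= ?linearD /= ?mxtraceD ?aT ?bT ?atr ?btr ?addr0.
Qed.

Lemma inZ_zscale c a : inZ a -> inZ (zscale c a).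
Proof. by move=> [aT atr]; split; rewrite /= ?linearZ /= ?mxtraceZ ?aT ?atr ?mulr0. Qed.

Lemma inZ_zsub a b : inZ a -> inZ b -> inZ (zsub a b).
Proof. by move=> aZ bZ; exact: inZ_zadd aZ (inZ_zscale _ bZ). Qed.

Lemma inZ_zcomb l a b : inZ a -> inZ b -> inZ (zcomb l a b).
Proof. by move=> aZ bZ; exact: inZ_zadd (inZ_zscale _ aZ) (inZ_zscale _ bZ). Qed.

Lemma dotZl c x y : dot (c *: x) y = c * dot x y.
Proof. by rewrite /dot mulr_sumr; apply: eq_bigr => i _; rewrite mxE mulrA. Qed.

Lemma Lambda_zscale c w : c != 0 -> Lambda w -> Lambda (zscale c w).
Proof.
move=> c0 [wZ [w0 [xi [d [xid0 [hs [hv hm]]]]]]].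
split; first exact: inZ_zscale.
split.
  case: w0 => w0; [left | right] => /=; apply/eqP.
    by rewrite scaler_eq0 negb_or c0; apply/eqP.
  by rewrite mulf_neq0 //; apply/eqP.
exists xi, d; split => //=; split; last split.
- by rewrite -scale_scalar_mx -scalerDr -scalemxAl scalerA mulrC -scalerA -scalerDr hs scaler0.
- by rewrite dotZl hv mulr0.
- by rewrite dotZl mulrCA -mulrDr hm mulr0.
Qed.

(* On [Kset], [v v^T - sigma = e Id] with [sigma] traceless forces [e = |v|^2 / 2]. *)
Definition ekin x := dot x x / 2.

Definition Kpt (p : R) x : Zpt R :=
  MkZ x ((ekin x + p) *: x) (x *m x^T - (ekin x)%:M) (ekin x).

Lemma Kpt_inZ p x : inZ (Kpt p x).
Proof.
split => /=; first by rewrite linearB /= trmx_mul trmxK tr_scalar_mx.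
by rewrite mxtrace2 !mxE !big_ord1 !mxE /ekin dotE /=; field.
Qed.

Lemma Kpt_Kset p g x : ekin x <= g -> Kset p g (Kpt p x).
Proof. by move=> xg; split; [exact: Kpt_inZ | rewrite /= opprB addrC subrK]. Qed.

Lemma Lambda_sub_Kpt p x y : x != y -> Lambda (zsub (Kpt p x) (Kpt p y)).
Proof.
move=> xy; split; first by apply: inZ_zsub; apply: Kpt_inZ.
split; first by left; rewrite /= scaleN1r; apply/eqP; rewrite subr_eq0.
exists (cV2 (y 1 0 - x 1 0) (x 0 0 - y 0 0)), (x 1 0 * y 0 0 - x 0 0 * y 1 0).
split.
  left => /(congr1 (fun M : 'cV[R]_2 => (M 0 0, M 1 0))); rewrite !mxE /=.
  by move=> -[/subr0_eq y1 /subr0_eq x0]; move/eqP: xy; apply; apply: cV2P.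
by split; [apply: cV2P | split];
  rewrite /= /ekin ?dotE !(mxE, sum2E, big_ord1) /= ?mulr1n ?mulr0n; field.
Qed.

Lemma Lambda_convex_comb_le f a b l M : Lambda_convex f -> inZ b ->
  Lambda (zsub a b) -> 0 <= l <= 1 -> f a <= M -> f b <= M -> f (zcomb l a b) <= M.
Proof.
move=> fc bZ ab /andP[l0 l1] fa fb.
have := fc b (zsub a b) bZ ab 1 0 l l0 l1.
have -> : zadd b (zscale (l * 1 + (1 - l) * 0) (zsub a b)) = zcomb l a b by zpt_field.
have -> : zadd b (zscale 1 (zsub a b)) = a by zpt_field.
have -> : zadd b (zscale 0 (zsub a b)) = b by zpt_field.
by move=> /le_trans; apply; nra.
Qed.

(* Nested so that every [zcomb] joins two points differing by a nonzero multiple of some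
   [zsub (Kpt p x) (Kpt p y)]; [laminateE] computes the barycenter. *)
Definition laminate (al be : R) (X1 X2 X3 X4 : Zpt R) : Zpt R :=
  zcomb be (zcomb al (zcomb (1/2) X1 X3) (zcomb (1/2) X2 X3))
           (zcomb al (zcomb (1/2) X1 X4) (zcomb (1/2) X2 X4)).

Lemma laminateE al be X1 X2 X3 X4 :
  laminate al be X1 X2 X3 X4 = zcomb (1/2) (zcomb al X1 X2) (zcomb be X3 X4).
Proof. by zpt_field. Qed.

Lemma Lambda_convex_laminate_Kpt f p al be x1 x2 x3 x4 :
  Lambda_convex f -> 0 <= al <= 1 -> 0 <= be <= 1 -> uniq [:: x1; x2; x3; x4] ->
  has (fun x => f (laminate al be (Kpt p x1) (Kpt p x2) (Kpt p x3) (Kpt p x4)) <= f (Kpt p x))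
    [:: x1; x2; x3; x4].
Proof.
move=> fc al01 be01; rewrite /= !inE !negb_or.
move=> /and4P[/and3P[n12 n13 n14] /andP[n23 n24] n34 _].
set M := Num.max (Num.max (f (Kpt p x1)) (f (Kpt p x2)))
                 (Num.max (f (Kpt p x3)) (f (Kpt p x4))).
suff : f (laminate al be (Kpt p x1) (Kpt p x2) (Kpt p x3) (Kpt p x4)) <= M.
  by rewrite !le_max orbF !orbA.
have le_M1 : f (Kpt p x1) <= M by rewrite !le_max lexx.
have le_M2 : f (Kpt p x2) <= M by rewrite !le_max lexx !orbT.
have le_M3 : f (Kpt p x3) <= M by rewrite !le_max lexx !orbT.
have le_M4 : f (Kpt p x4) <= M by rewrite !le_max lexx !orbT.
have half01 : 0 <= (1/2 : R) <= 1 by apply/andP; split; lra.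
have half_neq0 : (1/2 : R) != 0 by rewrite div1r invr_eq0 pnatr_eq0.
have mid_le x y : x != y -> f (Kpt p x) <= M -> f (Kpt p y) <= M ->
    f (zcomb (1/2) (Kpt p x) (Kpt p y)) <= M.
  by move=> xy; apply: (Lambda_convex_comb_le fc (Kpt_inZ p y) (Lambda_sub_Kpt p xy)).
have inZ_mid x y : inZ (zcomb (1/2) (Kpt p x) (Kpt p y)).
  by apply: inZ_zcomb; apply: Kpt_inZ.
have Lambda12 x :
    Lambda (zsub (zcomb (1/2) (Kpt p x1) (Kpt p x)) (zcomb (1/2) (Kpt p x2) (Kpt p x))).
  rewrite (_ : zsub _ _ = zscale (1/2) (zsub (Kpt p x1) (Kpt p x2))); last by zpt_field.
  exact/Lambda_zscale/Lambda_sub_Kpt.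
apply: Lambda_convex_comb_le => //.
- by apply: inZ_zcomb.
- rewrite (_ : zsub _ _ = zscale (1/2) (zsub (Kpt p x3) (Kpt p x4))); last by zpt_field.
  exact/Lambda_zscale/Lambda_sub_Kpt.
- by apply: Lambda_convex_comb_le; rewrite ?mid_le.
- by apply: Lambda_convex_comb_le; rewrite ?mid_le.
Qed.

End WaveCone.

Section Eigenvalues.
Variable R : realType.
Implicit Types (A : 'M[R]_2) (mu : R).

Lemma eigenvalue_char2 A mu : eigenvalue A mu -> mu ^+ 2 - \tr A * mu + \det A = 0.
Proof.
move=> /eigenvalueP[x xA x_neq0].
have [e0 e1] : (A 0 0 - mu) * x 0 0 + A 1 0 * x 0 1 = 0 /\
               A 0 1 * x 0 0 + (A 1 1 - mu) * x 0 1 = 0.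
  have := congr1 (fun y : 'rV[R]_2 => (y 0 0, y 0 1)) xA.
  by rewrite !mxE !sum2E => -[h0 h1]; split; lra.
set P := mu ^+ 2 - \tr A * mu + \det A.
have Px0 : P * x 0 0 = (A 1 1 - mu) * ((A 0 0 - mu) * x 0 0 + A 1 0 * x 0 1)
                        - A 1 0 * (A 0 1 * x 0 0 + (A 1 1 - mu) * x 0 1).
  by rewrite /P mxtrace2 det_mx22; ring.
have Px1 : P * x 0 1 = (A 0 0 - mu) * (A 0 1 * x 0 0 + (A 1 1 - mu) * x 0 1)
                        - A 0 1 * ((A 0 0 - mu) * x 0 0 + A 1 0 * x 0 1).
  by rewrite /P mxtrace2 det_mx22; ring.
rewrite e0 e1 !mulr0 subrr in Px0 Px1.
apply/eqP; apply: contraNT x_neq0 => P_neq0; apply/eqP/matrixP => i j.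
rewrite (ord1 i) mxE; apply: (mulfI P_neq0); rewrite mulr0.
by elim/ord2P: j.
Qed.

Lemma eigenvalue_le A mu : eigenvalue A mu -> mu <= `|\tr A| + `|\det A| + 1.
Proof.
move=> /eigenvalue_char2 char; rewrite leNgt; apply/negP => lt_mu.
have := ler_norm (\tr A); have := ler_norm (- \det A); rewrite normrN.
have := normr_ge0 (\tr A); have := normr_ge0 (\det A).
nra.
Qed.

Lemma eigenvalue_sym2 A mu : A 1 0 = A 0 1 ->
  mu ^+ 2 - \tr A * mu + \det A = 0 -> eigenvalue A mu.
Proof.
rewrite mxtrace2 det_mx22 => Asym char; apply/eigenvalueP.
have [x_neq0 | /norP[/negPn/eqP A01 /negPn/eqP mu_eq]] :=
  boolP ((A 0 1 != 0) || (mu - A 0 0 != 0)).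
  exists (cV2 (A 0 1) (mu - A 0 0))^T.
    apply/matrixP => i j; rewrite (ord1 i) !mxE !sum2E !mxE /=.
    by elim/ord2P: j; rewrite /= ?Asym; nra.
  apply: contraTneq x_neq0 => /(congr1 (fun y : 'rV[R]_2 => (y 0 0, y 0 1))).
  by rewrite !mxE /= => -[-> ->]; rewrite eqxx.
exists (cV2 1 0)^T.
  apply/matrixP => i j; rewrite (ord1 i) !mxE !sum2E !mxE /=.
  by elim/ord2P: j; rewrite /= ?Asym A01; lra.
apply/negP => /eqP/(congr1 (fun y : 'rV[R]_2 => y 0 0)).
by rewrite !mxE /=; apply/eqP/oner_neq0.
Qed.

Lemma lambda_max_sym2_ge A : A 1 0 = A 0 1 ->
  (A 0 0 + A 1 1) / 2 + Num.sqrt (((A 0 0 - A 1 1) / 2) ^+ 2 + A 0 1 ^+ 2) <= lambda_max A.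
Proof.
move=> Asym; apply: ub_le_sup.
  by exists (`|\tr A| + `|\det A| + 1) => mu /eigenvalue_le.
apply: eigenvalue_sym2 => //.
set S := Num.sqrt _; have S2 : S ^+ 2 = ((A 0 0 - A 1 1) / 2) ^+ 2 + A 0 1 ^+ 2.
  by rewrite sqr_sqrtr // addr_ge0 ?sqr_ge0.
rewrite mxtrace2 det_mx22 Asym.
have -> : ((A 0 0 + A 1 1) / 2 + S) ^+ 2 =
    ((A 0 0 + A 1 1) / 2) ^+ 2 + (A 0 0 + A 1 1) * S + S ^+ 2 by field.
by rewrite S2; field.
Qed.

End Eigenvalues.

Section ScalarBounds.
Variable R : realType.

Lemma norm_le_of_sqr (x y : R) : 0 <= y -> x ^+ 2 <= y ^+ 2 -> `|x| <= y.
Proof.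
move=> y_ge0 xy; rewrite -(ler_pXn2r (isT : (0 < 2)%N)) ?nnegrE ?normr_ge0 //.
by rewrite real_normK ?num_real.
Qed.

Lemma sym2_top_lt (a b d l : R) :
  (a + d) / 2 + Num.sqrt (((a - d) / 2) ^+ 2 + b ^+ 2) < l ->
  [/\ 0 < l - a, 0 < l - d & b ^+ 2 < (l - a) * (l - d)].
Proof.
set S := Num.sqrt _ => lt_l.
have S_ge0 : 0 <= S := sqrtr_ge0 _.
have S2 : S ^+ 2 = ((a - d) / 2) ^+ 2 + b ^+ 2 by rewrite sqr_sqrtr // addr_ge0 ?sqr_ge0.
have : `|(a - d) / 2| <= S by apply: norm_le_of_sqr; rewrite // S2 lerDl sqr_ge0.
rewrite ler_norml => /andP[ge_S le_S].
split; [lra | lra |].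
have -> : (l - a) * (l - d) = (l - (a + d) / 2) ^+ 2 - ((a - d) / 2) ^+ 2 by field.
have : S ^+ 2 < (l - (a + d) / 2) ^+ 2 by rewrite ltr_pXn2r ?nnegrE //; lra.
lra.
Qed.

Lemma pd_shift_bounds (c00 c01 c11 n0 n1 eps N : R) : 0 < eps -> 0 <= N ->
  n0 ^+ 2 + n1 ^+ 2 = N ^+ 2 -> 0 < c00 - eps * N -> 0 < c11 - eps * N ->
  c01 ^+ 2 < (c00 - eps * N) * (c11 - eps * N) ->
  [/\ 0 < c11, 0 < c00 * c11 - c01 ^+ 2, eps * `|n1| < c11 &
      eps * `|n0 * c11 - n1 * c01| < c00 * c11 - c01 ^+ 2].
Proof.
move=> eps_gt0 N_ge0 nN lt00 lt11 lt01; set mu := eps * N in lt00 lt11 lt01.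
have mu_ge0 : 0 <= mu by rewrite /mu pmulr_rge0.
have det_gt : mu * (c00 + c11 - mu) < c00 * c11 - c01 ^+ 2 by nra.
have n1_le : `|n1| <= N by apply: norm_le_of_sqr N_ge0 _; nra.
have CS : (n0 * c11 - n1 * c01) ^+ 2 <= N ^+ 2 * (c11 ^+ 2 + c01 ^+ 2).
  by rewrite -nN; have := sqr_ge0 (n0 * c01 + n1 * c11); nra.
have c_le : c11 ^+ 2 + c01 ^+ 2 <= (c00 + c11 - mu) ^+ 2 by nra.
have n_le : `|n0 * c11 - n1 * c01| <= N * (c00 + c11 - mu).
  apply: norm_le_of_sqr; first by apply: mulr_ge0 => //; lra.
  by rewrite exprMn; apply: le_trans CS _; apply: ler_wpM2l => //; exact: sqr_ge0.
have prod_ge0 : 0 <= mu * (c00 + c11 - mu) by apply: mulr_ge0 => //; lra.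
split; [lra | lra | |].
  by have := ler_wpM2l (ltW eps_gt0) n1_le; rewrite -/mu; lra.
apply: le_lt_trans det_gt; rewrite /mu -mulrA ler_pM2l //.
Qed.

Lemma weight01 (s t : R) : 0 < s -> 0 < t -> 0 <= t / (s + t) <= 1.
Proof.
move=> s_gt0 t_gt0; apply/andP; split; first by apply: divr_ge0; lra.
by rewrite ler_pdivrMr ?addr_gt0 //; lra.
Qed.

Lemma sqr_div_le (eps N D : R) : 0 < eps -> 0 < D -> eps * `|N| < D ->
  (N / D) ^+ 2 <= 1 / eps ^+ 2.
Proof.
move=> eps_gt0 D_gt0 lt_ND.
have lt1 : eps * `|N / D| < 1.
  by rewrite normrM normfV (gtr0_norm D_gt0) mulrA ltr_pdivrMr // mul1r.
rewrite -real_normK ?num_real // ler_pdivlMr ?exprn_gt0 // -exprMn mulrC.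
by apply: exprn_ile1; [rewrite pmulr_rge0 | exact: ltW].
Qed.

End ScalarBounds.

Section Segments.
Variable R : realType.
Implicit Types (w : Zpt R) (u v x : 'cV[R]_2) (C : 'M[R]_2).

(* Both vanish on [Kset]. *)
Definition cmx w : 'M[R]_2 := (ze w)%:M - (zv w *m (zv w)^T - zs w).
Definition mdev (p : R) w : 'cV[R]_2 := zm w - (ze w + p) *: zv w.

Definition zpoint (p : R) v C (n : 'cV[R]_2) : Zpt R :=
  let e := (dot v v + \tr C) / 2 in
  MkZ v (n + (e + p) *: v) (v *m v^T - e%:M + C) e.

Lemma cmx_sym w : inZ w -> cmx w 1 0 = cmx w 0 1.
Proof.
by move=> [wT _]; rewrite !mxE !big_ord1 !mxE -[zs w in LHS]wT mxE mulrC.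
Qed.

Lemma mxtrace_cmx w : inZ w -> \tr (cmx w) = 2 * ze w - dot (zv w) (zv w).
Proof.
by move=> [_]; rewrite !mxtrace2 dotE !(mxE, big_ord1) /= ?mulr1n => trw; lra.
Qed.

Lemma zpoint_cmx p w : inZ w -> w = zpoint p (zv w) (cmx w) (mdev p w).
Proof.
move=> wZ; have ew : (dot (zv w) (zv w) + \tr (cmx w)) / 2 = ze w.
  by rewrite mxtrace_cmx //; field.
by apply: zP; rewrite //= ew ?subrK // /cmx addrA subrK opprB addrC subrK.
Qed.

Lemma zcomb_zpoint p v C1 C2 n1 n2 :
  zcomb (1/2) (zpoint p v C1 n1) (zpoint p v C2 n2) =
  zpoint p v ((1/2) *: (C1 + C2)) ((1/2) *: (n1 + n2)).
Proof.
by apply: zP => /=; try apply/matrixP => i j; rewrite !(mxE, mxtrace2) /=; field.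
Qed.

Lemma zcomb_Kpt_segment p v u s t : 0 < s + t ->
  zcomb (t / (s + t)) (Kpt p (v + s *: u)) (Kpt p (v - t *: u)) =
  zpoint p v ((s * t) *: (u *m u^T)) ((s * t * (dot u v + (s - t) / 2 * dot u u)) *: u).
Proof.
move=> st_gt0; have st_neq0 : s + t != 0 by rewrite gt_eqF.
apply: zP => /=;
  try (apply/matrixP => i j; elim/ord2P: i; first [rewrite (ord1 j) | elim/ord2P: j]).
all: rewrite /ekin !(mxE, mxtrace2, dotE, big_ord1, sum2E) /= ?mulr1n ?mulr0n; by field.
Qed.

Lemma exists_pos_prod_diff (c d : R) : 0 < c ->
  exists s t : R, [/\ 0 < s, 0 < t, s * t = c & s - t = d].
Proof.
move=> c_gt0; set S := Num.sqrt (d ^+ 2 + 4 * c).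
have S2 : S ^+ 2 = d ^+ 2 + 4 * c by rewrite sqr_sqrtr //; nra.
have S_ge0 : 0 <= S by exact: sqrtr_ge0.
exists ((S + d) / 2), ((S - d) / 2); split; [nra | nra | | by field].
have -> : (S + d) / 2 * ((S - d) / 2) = (S ^+ 2 - d ^+ 2) / 4 by field.
by rewrite S2; field.
Qed.

Lemma dot_CauchySchwarz u v : dot u v ^+ 2 <= dot u u * dot v v.
Proof. by rewrite !dotE; have := sqr_ge0 (u 0 0 * v 1 0 - u 1 0 * v 0 0); nra. Qed.

Lemma ekin_segment_le v u s t r : 0 < s -> 0 < t -> 1 <= dot u u ->
  (s - t) * dot u u = 2 * (r - dot u v) ->
  let bound := 9 * dot v v + 8 * r ^+ 2 + 2 * (s * t) * dot u u in
  ekin (v + s *: u) <= bound /\ ekin (v - t *: u) <= bound.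
Proof.
move=> s_gt0 t_gt0 u1 st_eq bound.
have CS := dot_CauchySchwarz u v.
have dotDZ (a : R) :
    dot (v + a *: u) (v + a *: u) = dot v v + 2 * a * dot u v + a ^+ 2 * dot u u.
  by rewrite !dotE !mxE; ring.
have v_ge0 : 0 <= dot v v by rewrite dotE; nra.
have diff2 : (s - t) ^+ 2 * dot u u <= 8 * r ^+ 2 + 8 * dot v v.
  rewrite -(ler_pM2r (lt_le_trans ltr01 u1)) -mulrA -expr2 -exprMn st_eq.
  have := sqr_ge0 (r + dot u v); nra.
have ekin_shift_le a : ekin (v + a *: u) <= dot v v + a ^+ 2 * dot u u.
  rewrite /ekin dotDZ; suff : 0 <= dot v v - 2 * a * dot u v + a ^+ 2 * dot u u by lra.
  rewrite -(pmulr_rge0 _ (lt_le_trans ltr01 u1)).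
  by have := sqr_ge0 (a * dot u u - dot u v); nra.
split; first by apply: le_trans (ekin_shift_le s) _; rewrite /bound; nra.
by rewrite -scaleNr; apply: le_trans (ekin_shift_le (- t)) _; rewrite /bound; nra.
Qed.

Lemma Kpt_segment p v u (c r : R) : 0 < c -> 1 <= dot u u ->
  exists s t : R, [/\ 0 < s, 0 < t,
    zcomb (t / (s + t)) (Kpt p (v + s *: u)) (Kpt p (v - t *: u)) =
      zpoint p v (c *: (u *m u^T)) ((c * r) *: u) &
    forall x, x \in [:: v + s *: u; v - t *: u] ->
      ekin x <= 9 * dot v v + 8 * r ^+ 2 + 2 * c * dot u u].
Proof.
move=> c_gt0 u_ge1; have U_neq0 : dot u u != 0 by rewrite gt_eqF // (lt_le_trans ltr01).
have [s [t [s_gt0 t_gt0 st_c st_d]]] :=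
  exists_pos_prod_diff (2 * (r - dot u v) / dot u u) c_gt0.
have st_eq : (s - t) * dot u u = 2 * (r - dot u v) by rewrite st_d divfK.
exists s, t; split => //.
  rewrite zcomb_Kpt_segment ?addr_gt0 // st_c; congr (zpoint _ _ _ ((c * _) *: _)).
  by rewrite mulrAC st_eq; field.
move=> x; have /= := ekin_segment_le s_gt0 t_gt0 u_ge1 st_eq.
by rewrite st_c !inE => -[le_s le_t] /orP[] /eqP ->.
Qed.

Lemma uniq_segment_ends v (k s1 t1 s2 t2 : R) : 0 < s1 -> 0 < t1 -> 0 < s2 -> 0 < t2 ->
  uniq [:: v + s1 *: cV2 1 0; v - t1 *: cV2 1 0; v + s2 *: cV2 k 1; v - t2 *: cV2 k 1].
Proof.
move=> *; rewrite /= !inE !negb_or !andbT; repeat (apply/andP; split);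
  apply/negP => /eqP /(congr1 (fun x : 'cV[R]_2 => (x 0 0, x 1 0))) [];
  by rewrite !mxE /= ?mulr1 ?mulr0 => *; lra.
Qed.

End Segments.

Section Admissible.
Variable R : realType.
Implicit Types (w : Zpt R) (u v x y n : 'cV[R]_2) (C : 'M[R]_2) (p eps : R).

Lemma zpoint_laminate p eps v C n : 0 < eps -> C 1 0 = C 0 1 -> 0 < C 1 1 -> 0 < \det C ->
  eps * `|n 1 0| < C 1 1 -> eps * `|n 0 0 * C 1 1 - n 1 0 * C 0 1| < \det C ->
  exists al be x1 x2 x3 x4, [/\ 0 <= al <= 1, 0 <= be <= 1, uniq [:: x1; x2; x3; x4],
    zpoint p v C n = laminate al be (Kpt p x1) (Kpt p x2) (Kpt p x3) (Kpt p x4) &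
    forall x, x \in [:: x1; x2; x3; x4] -> ekin x <= 9 * (dot v v + \tr C) + 8 / eps ^+ 2].
Proof.
move=> eps_gt0 Csym C11_gt0 det_gt0 lt_r lt_q.
(* [C = c1 e0 e0^T + C11 u u^T] and [n = c1 q e0 + C11 r u]. *)
set k := C 0 1 / C 1 1; set c1 := \det C / C 1 1.
set q := (n 0 0 * C 1 1 - n 1 0 * C 0 1) / \det C; set r := n 1 0 / C 1 1.
set e0 : 'cV[R]_2 := cV2 1 0; set u : 'cV[R]_2 := cV2 k 1.
have C11_neq0 : C 1 1 != 0 by rewrite gt_eqF.
have c1E : c1 = C 0 0 - C 0 1 ^+ 2 / C 1 1 by rewrite /c1 det_mx22 Csym; field.
have C01_le : C 0 1 ^+ 2 / C 1 1 <= C 0 0.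
  by rewrite ler_pdivrMr //; move: det_gt0; rewrite det_mx22 Csym; nra.
have C01_ge0 : 0 <= C 0 1 ^+ 2 / C 1 1 by rewrite divr_ge0 ?sqr_ge0 ?ltW.
have c1_gt0 : 0 < c1 by apply: divr_gt0.
have e0_ge1 : 1 <= dot e0 e0 by rewrite dotE !(cV2E0, cV2E1); lra.
have uE : dot u u = 1 + C 0 1 ^+ 2 / C 1 1 / C 1 1.
  by rewrite dotE !(cV2E0, cV2E1) /k; field.
have u_ge1 : 1 <= dot u u.
  rewrite uE lerDl; apply: divr_ge0 (ltW C11_gt0).
  exact: divr_ge0 (sqr_ge0 _) (ltW C11_gt0).
have [s1 [t1 [s1_gt0 t1_gt0 seg1 ekin1]]] :=
  Kpt_segment p v q (mulr_gt0 (ltr0n _ 2) c1_gt0) e0_ge1.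
have [s2 [t2 [s2_gt0 t2_gt0 seg2 ekin2]]] :=
  Kpt_segment p v r (mulr_gt0 (ltr0n _ 2) C11_gt0) u_ge1.
exists (t1 / (s1 + t1)), (t2 / (s2 + t2)), (v + s1 *: e0), (v - t1 *: e0),
  (v + s2 *: u), (v - t2 *: u).
split; rewrite ?weight01 //.
- exact: uniq_segment_ends.
- have det_neq0 : \det C != 0 by rewrite gt_eqF.
  have det22_neq0 := det_neq0; rewrite det_mx22 in det22_neq0.
  rewrite laminateE seg1 seg2 zcomb_zpoint; congr zpoint.
  + by apply: M2P; rewrite !(mxE, big_ord1) /= /c1 /k det_mx22 ?Csym; field.
  + by apply: cV2P; rewrite !(mxE, big_ord1) /= /c1 /q /r /k;
      field; rewrite C11_neq0 det_neq0.
have q2 : q ^+ 2 <= 1 / eps ^+ 2 := sqr_div_le eps_gt0 det_gt0 lt_q.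
have r2 : r ^+ 2 <= 1 / eps ^+ 2 := sqr_div_le eps_gt0 C11_gt0 lt_r.
have v_ge0 : 0 <= dot v v by rewrite dotE; nra.
have trC : \tr C = C 0 0 + C 1 1 by rewrite mxtrace2.
have e0E : dot e0 e0 = 1 by rewrite dotE !(cV2E0, cV2E1); ring.
have C11u : C 1 1 * dot u u = C 1 1 + C 0 1 ^+ 2 / C 1 1 by rewrite uE; field.
rewrite e0E mulr1 in ekin1; rewrite -!mulrA C11u in ekin2.
move=> x; rewrite !inE => /or4P[] /eqP ->.
- by apply: le_trans (ekin1 _ _) _; rewrite ?inE ?eqxx //; lra.
- by apply: le_trans (ekin1 _ _) _; rewrite ?inE ?eqxx ?orbT //; lra.
- by apply: le_trans (ekin2 _ _) _; rewrite ?inE ?eqxx //; lra.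
- by apply: le_trans (ekin2 _ _) _; rewrite ?inE ?eqxx ?orbT //; lra.
Qed.

(* [cmx w] is positive definite and the coordinates [q], [r] of [mdev p w] in the
   decomposition used by [zpoint_laminate] are below [1 / eps] in absolute value. *)
Definition admissible p eps w :=
  [/\ 0 < cmx w 1 1, 0 < \det (cmx w), eps * `|mdev p w 1 0| < cmx w 1 1 &
      eps * `|mdev p w 0 0 * cmx w 1 1 - mdev p w 1 0 * cmx w 0 1| < \det (cmx w)].

Lemma admissible_Lambda_hull p eps g w : 0 < eps -> inZ w -> admissible p eps w ->
  18 * ze w + 8 / eps ^+ 2 <= g -> Lambda_hull (Kset p g) w.
Proof.
move=> eps_gt0 wZ [C11_gt0 det_gt0 lt_r lt_q] le_g.
have [al [be [x1 [x2 [x3 [x4 [al01 be01 xs_uniq w_eq ekin_le]]]]]]] :=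
  zpoint_laminate p (zv w) eps_gt0 (cmx_sym wZ) C11_gt0 det_gt0 lt_r lt_q.
rewrite -(zpoint_cmx p wZ) in w_eq; rewrite mxtrace_cmx // in ekin_le.
split => // f fc.
have /hasP[x x_in le_fx] := Lambda_convex_laminate_Kpt p fc al01 be01 xs_uniq.
rewrite {1}w_eq; apply: (@le_trans _ _ (f (Kpt p x))%:E); first by rewrite lee_fin.
apply: ereal_sup_ubound; exists (Kpt p x) => //; apply: Kpt_Kset.
by have := ekin_le x x_in; lra.
Qed.

Lemma admissible_of_lambda_max p eps (z : Zpt R) : 0 < eps -> inZ z ->
  lambda_max (zv z *m (zv z)^T - zs z) + eps * enorm (mdev p z) < ze z ->
  admissible p eps z.
Proof.
move=> eps_gt0 zZ; set A := zv z *m (zv z)^T - zs z; set N := enorm (mdev p z) => lt_e.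
have C_A i j : cmx z i j = ze z *+ (i == j) - A i j.
  by rewrite /cmx -/A [LHS]mxE [_%:M _ _]mxE [(- A) _ _]mxE.
have Asym : A 1 0 = A 0 1 by move: (cmx_sym zZ); rewrite !C_A /= => /subrI.
have top_le := lambda_max_sym2_ge Asym.
have [] := @sym2_top_lt _ (A 0 0) (A 0 1) (A 1 1) (ze z - eps * N) ltac:(lra).
have N_ge0 : 0 <= N := sqrtr_ge0 _.
have N2 : mdev p z 0 0 ^+ 2 + mdev p z 1 0 ^+ 2 = N ^+ 2.
  by rewrite sqr_sqrtr dotE -!expr2 // addr_ge0 ?sqr_ge0.
move=> lt00 lt11 lt01.
have [] := @pd_shift_bounds _ (cmx z 0 0) (cmx z 0 1) (cmx z 1 1) _ _ _ _ eps_gt0 N_ge0 N2.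
- by rewrite C_A /=; lra.
- by rewrite C_A /=; lra.
- by rewrite !C_A /= sub0r sqrrN; lra.
by rewrite /admissible det_mx22 (cmx_sym zZ) -expr2.
Qed.

End Admissible.

(* [Zpt] carries no topology: as in [interiorZ], neighbourhoods are [zdist]-balls. *)
Definition zdist_nbhs (R : realType) (z : Zpt R) : set_system (Zpt R) :=
  filter_from [set r : R | 0 < r] (fun r => [set w | zdist z w < r]).

Instance zdist_nbhs_filter (R : realType) (z : Zpt R) : Filter (zdist_nbhs z).
Proof.
apply: filter_from_filter; first by exists 1; rewrite /= ltr01.
move=> r1 r2 r1_gt0 r2_gt0; exists (Num.min r1 r2); first by rewrite /= lt_min r1_gt0.
by move=> w /=; rewrite lt_min => /andP[].
Qed.

Section Openness.
Variable R : realType.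
Implicit Types (z w : Zpt R) (p eps : R).

Lemma zdist_coord_le z w :
  [/\ forall i, `|zv z i 0 - zv w i 0| <= zdist z w,
      forall i, `|zm z i 0 - zm w i 0| <= zdist z w,
      forall i j, `|zs z i j - zs w i j| <= zdist z w &
      `|ze z - ze w| <= zdist z w].
Proof.
rewrite /zdist !dotE !sum2E !mxE -!expr2.
move: (sqr_ge0 (zv z 0 0 - zv w 0 0)) (sqr_ge0 (zv z 1 0 - zv w 1 0)).
move: (sqr_ge0 (zm z 0 0 - zm w 0 0)) (sqr_ge0 (zm z 1 0 - zm w 1 0)).
move: (sqr_ge0 (zs z 0 0 - zs w 0 0)) (sqr_ge0 (zs z 0 1 - zs w 0 1)).
move: (sqr_ge0 (zs z 1 0 - zs w 1 0)) (sqr_ge0 (zs z 1 1 - zs w 1 1)).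
move: (sqr_ge0 (ze z - ze w)) => *.
split=> [i|i|i j|]; try elim/ord2P: i; try elim/ord2P: j;
  by apply: norm_le_of_sqr (sqrtr_ge0 _) _; rewrite sqr_sqrtr; lra.
Qed.

Lemma cvg_zdist (g : Zpt R -> R) z : (forall w, `|g z - g w| <= zdist z w) ->
  g w @[w --> zdist_nbhs z] --> g z.
Proof.
move=> g_le; apply/cvgrPdist_lt => e e_gt0; exists e => // w /=.
exact: le_lt_trans.
Qed.

Lemma cvg_zcoord z :
  [/\ forall i, zv w i 0 @[w --> zdist_nbhs z] --> zv z i 0,
      forall i, zm w i 0 @[w --> zdist_nbhs z] --> zm z i 0,
      forall i j, zs w i j @[w --> zdist_nbhs z] --> zs z i j &
      ze w @[w --> zdist_nbhs z] --> ze z].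
Proof. by split=> *; apply: cvg_zdist => w; case: (zdist_coord_le z w). Qed.

Lemma cvg_cmx z i j : cmx w i j @[w --> zdist_nbhs z] --> cmx z i j.
Proof.
have [cvg_v _ cvg_s cvg_e] := cvg_zcoord z.
have cmxE w : cmx w i j = ze w *+ (i == j) - (zv w i 0 * zv w j 0 - zs w i j).
  by rewrite !mxE big_ord1 !mxE.
rewrite (funext cmxE) cmxE.
by apply: cvgB; [exact: cvgMn | apply: cvgB; [apply: cvgM |]].
Qed.

Lemma cvg_det_cmx z : \det (cmx w) @[w --> zdist_nbhs z] --> \det (cmx z).
Proof.
rewrite (funext (fun w => det_mx22 (cmx w))) det_mx22.
by apply: cvgB; apply: cvgM; apply: cvg_cmx.
Qed.

Lemma cvg_mdev p z i : mdev p w i 0 @[w --> zdist_nbhs z] --> mdev p z i 0.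
Proof.
have [cvg_v cvg_m _ cvg_e] := cvg_zcoord z.
have mdevE w : mdev p w i 0 = zm w i 0 - (ze w + p) * zv w i 0 by rewrite !mxE.
rewrite (funext mdevE) mdevE.
by apply: cvgB => //; apply: cvgM => //; apply: cvgD => //; exact: cvg_cst.
Qed.

Lemma admissible_near p eps z : admissible p eps z ->
  \forall w \near zdist_nbhs z, admissible p eps w.
Proof.
move=> [C11_gt0 det_gt0 lt_r lt_q].
have cvg_r : (cmx w 1 1 - eps * `|mdev p w 1 0|) @[w --> zdist_nbhs z] -->
    cmx z 1 1 - eps * `|mdev p z 1 0|.
  apply: cvgB; [exact: cvg_cmx | apply: cvgM; [exact: cvg_cst | apply: cvg_norm]].
  exact: cvg_mdev.
have cvg_q : (\det (cmx w) - eps * `|mdev p w 0 0 * cmx w 1 1 - mdev p w 1 0 * cmx w 0 1|)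
    @[w --> zdist_nbhs z] -->
    \det (cmx z) - eps * `|mdev p z 0 0 * cmx z 1 1 - mdev p z 1 0 * cmx z 0 1|.
  apply: cvgB; [exact: cvg_det_cmx | apply: cvgM; [exact: cvg_cst | apply: cvg_norm]].
  by apply: cvgB; apply: cvgM;
    [exact: cvg_mdev | exact: cvg_cmx | exact: cvg_mdev | exact: cvg_cmx].
near=> w; split;
  [near: w | near: w | rewrite -subr_gt0; near: w | rewrite -subr_gt0; near: w].
- exact: cvgr_gt _ (@cvg_cmx z 1 1) _ C11_gt0.
- exact: cvgr_gt _ (@cvg_det_cmx z) _ det_gt0.
- by apply: cvgr_gt _ cvg_r _ _; rewrite subr_gt0.
- by apply: cvgr_gt _ cvg_q _ _; rewrite subr_gt0.
Unshelve. all: end_near.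
Qed.

End Openness.

Theorem proposition2p10 (R : realType) (eps : R) (heps : 0 < eps) :
  exists gamma : R -> R,
    (forall e : R, 0 < e -> 0 < gamma e) /\
    (forall e : R, 0 < e -> {for e, continuous gamma}) /\
    forall (p : R) (z : Zpt R), inZ z ->
      lambda_max (zv z *m (zv z)^T - zs z)
        + eps * enorm (zm z - (ze z + p) *: zv z) < ze z ->
      interiorZ (Lambda_hull (Kset p (gamma (ze z)))) z.
Proof.
have c_gt0 : 0 < 8 / eps ^+ 2 by rewrite divr_gt0 ?exprn_gt0.
exists (fun e => 18 * e + 18 + 8 / eps ^+ 2); split; first by move=> e e_gt0; lra.
split.
  move=> e _; apply: cvgD; last exact: cvg_cst.
  by apply: cvgD; [apply: cvgM; [exact: cvg_cst | exact: cvg_id] | exact: cvg_cst].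
move=> p z zZ lt_e.
have zA := admissible_of_lambda_max heps zZ lt_e.
have [_ _ _ cvg_e] := cvg_zcoord z.
have [r r_gt0 near_z] : \forall w \near zdist_nbhs z, admissible p eps w /\ ze w < ze z + 1.
  near=> w; split; near: w; first exact: admissible_near.
  by apply: cvgr_lt cvg_e _ _; rewrite ltrDl.
split=> //; exists r; split=> // w wZ /near_z[wA ze_lt].
by apply: admissible_Lambda_hull heps wZ wA _; lra.
Unshelve. all: end_near.
Qed.
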